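(* Let $a>0$, $\epsilon>0$, $n\in\mathbb{N}$, $\sigma_n=n^{-a}$, and consider the pendulum Lagrangian $A_n(q_1,\dot q_1)=\frac12|\dot q_1|^2+\sigma_n(1-\cos q_1)$ on $\mathbb{R}$ with associated Hamiltonian $h_n(q_1,p_1)=\frac12|p_1|^2-\sigma_n(1-\cos q_1)$. Let $t_0<\bar t_1$ and let $\bar q_1$ be the solution of the Euler–Lagrange equation of $A_n$ on $(t_0,\bar t_1)$ satisfying $\bar q_1(t_0)=0$, $\bar q_1(\bar t_1)=\pi$. Let $e(\bar t_1-t_0)$ denote its energy, i.e. $(\bar q_1,\bar p_1)\in h_n^{-1}(e(\bar t_1-t_0))$ with $\bar p_1=\dot{\bar q}_1$, and let $\omega_1=\pi/(\bar t_1-t_0)$ be the average speed of $\bar q_1$ on $(t_0,\bar t_1)$. If $|\omega_1|<n^{-\frac a2-\epsilon}$, then $$e(\bar t_1-t_0)\sim \sigma_n\exp\Big(-\frac{C\sqrt{\sigma_n}}{|\omega_1|}\Big),$$ where $C$ is a positive constant.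
   Context: The notation $f\sim g$ means $\frac1{C'}g<f<C'g$ for some constant $C'>1$ independent of $n$. *)

From Stdlib Require Import Reals Lra.
From Coquelicot Require Import Coquelicot.
Open Scope R_scope.

Definition sigma_n (a : R) (n : nat) : R := Rpower (INR n) (- a).

Definition ham (sigma q p : R) : R := / 2 * p ^ 2 - sigma * (1 - cos q).

(* q solves the Euler-Lagrange equation of A_n(q,qdot) = 1/2 qdot^2 + sigma (1 - cos q),
   i.e. q'' = sigma * sin q, on the open interval (t0,t1), and q is continuous on
   the closed interval [t0,t1] (so that boundary values make sense). *)
Definition pendulum_EL_solution (sigma t0 t1 : R) (q : R -> R) : Prop :=
  (forall t, t0 < t < t1 ->
     ex_derive q t /\ is_derive (Derive q) t (sigma * sin (q t))) /\
  (forall t, t0 <= t <= t1 ->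
     filterlim q (within (fun s => t0 <= s <= t1) (locally t)) (locally (q t))).

From Stdlib Require Import Reals Lra.
From Coquelicot Require Import Coquelicot.
Open Scope R_scope.

(* Write [k = sqrt sigma_n] and [T = t1 - t0].  The energy identity
   [q'^2 = 2 e + 4 sigma_n sin^2 (q / 2)] forces [e > 0] (otherwise
   [sin^2 (q / 2) exp (-2 k t)] would be nonincreasing), hence [q' > 0] and [q]
   increases from [0] to [PI].  Along the orbit [A = 2 k sin (q / 2) + q'] satisfies
   [A' <= k A] and [A' >= (k - q' / 2) A], so [A exp (-k t)] decreases while
   [A exp (q / 2 - k t)] increases.  Comparing [A = sqrt (2 e)] at [q = 0] with
   [A = 2 k + sqrt (2 e + 4 sigma_n)] at [q = PI] gives [sqrt (2 e) ~ k exp (-k T)]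
   once [k T > PI], which is what [|omega1| < n^(-a/2-eps) <= k] guarantees; and
   [exp (-2 k T) = exp (-2 PI sqrt sigma_n / omega1)]. *)

(* [f (clamp a b s)] extends [f] from [[a, b]] by constants; it turns continuity
   within [[a, b]] into the plain continuity that [MVT_gen] and [IVT_gen] require. *)
Definition clamp (a b s : R) : R := Rmax a (Rmin b s).

Lemma clamp_in_interval (a b s : R) : a <= b -> a <= clamp a b s <= b.
Proof. intros; unfold clamp, Rmax, Rmin; repeat destruct Rle_dec; lra. Qed.

Lemma clamp_id (a b s : R) : a <= s <= b -> clamp a b s = s.
Proof. intros; unfold clamp, Rmax, Rmin; repeat destruct Rle_dec; lra. Qed.

Lemma clamp_lipschitz (a b u v : R) :
  a <= b -> Rabs (clamp a b u - clamp a b v) <= Rabs (u - v).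
Proof.
  intros; unfold clamp, Rmax, Rmin; repeat destruct Rle_dec;
    unfold Rabs; repeat destruct Rcase_abs; lra.
Qed.

Lemma continuous_clamp (a b s : R) : a <= b -> continuous (clamp a b) s.
Proof.
  intros Hab P [eps HP]; exists eps; intros y Hy; apply HP.
  exact (Rle_lt_trans _ _ _ (clamp_lipschitz a b y s Hab) Hy).
Qed.

Lemma filterlim_clamp (a b t : R) : a <= t <= b ->
  filterlim (clamp a b) (locally t) (within (fun s => a <= s <= b) (locally t)).
Proof.
  intros Ht P [eps HP]; exists eps; intros y Hy; apply HP.
  - rewrite <- (clamp_id a b t Ht) at 1.
    exact (Rle_lt_trans _ _ _ (clamp_lipschitz a b y t ltac:(lra)) Hy).
  - apply clamp_in_interval; lra.
Qed.

Lemma continuous_comp_clamp (a b t : R) (f : R -> R) : a <= t <= b ->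
  filterlim f (within (fun s => a <= s <= b) (locally t)) (locally (f t)) ->
  continuous (fun s => f (clamp a b s)) t.
Proof.
  intros Ht Hf; unfold continuous; rewrite (clamp_id a b t Ht).
  eapply filterlim_comp; [apply filterlim_clamp, Ht | exact Hf].
Qed.

Lemma filterlim_within_subinterval (f : R -> R) (a b u v t : R) :
  a <= u -> v <= b ->
  filterlim f (within (fun s => a <= s <= b) (locally t)) (locally (f t)) ->
  filterlim f (within (fun s => u <= s <= v) (locally t)) (locally (f t)).
Proof.
  intros Hau Hvb; apply filterlim_filter_le_1.
  intros P [eps HP]; exists eps; intros y Hy Hyuv; apply HP; [exact Hy | lra].
Qed.

Lemma nondecreasing_of_derive_nonneg (g dg : R -> R) (a b : R) : a <= b ->
  (forall x, a <= x <= b -> continuity_pt g x) ->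
  (forall x, a < x < b -> is_derive g x (dg x)) ->
  (forall x, a < x < b -> 0 <= dg x) ->
  g a <= g b.
Proof.
  intros Hab Hc Hd Hpos.
  destruct (Req_dec a b) as [<- | Hne]; [lra |].
  (* [MVT_gen] may return an endpoint, where [dg] has no known sign. *)
  destruct (MVT_gen g a b (fun x => Rmax 0 (dg x))) as [c [_ Hc2]];
    rewrite ?Rmin_left, ?Rmax_right by lra.
  - intros x Hx; rewrite Rmax_right by (apply Hpos; lra); auto.
  - exact Hc.
  - pose proof (Rmax_l 0 (dg c)).
    assert (0 <= Rmax 0 (dg c) * (b - a)) by (apply Rmult_le_pos; lra); lra.
Qed.

Lemma exp_weighted_comp_le (Phi dPhi q dq : R -> R) (c a b : R) : a <= b ->
  (forall y, is_derive Phi y (dPhi y)) ->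
  (forall t, a <= t <= b ->
     filterlim q (within (fun s => a <= s <= b) (locally t)) (locally (q t))) ->
  (forall t, a < t < b -> is_derive q t (dq t)) ->
  (forall t, a < t < b -> 0 <= dPhi (q t) * dq t + c * Phi (q t)) ->
  Phi (q a) * exp (c * a) <= Phi (q b) * exp (c * b).
Proof.
  intros Hab HPhi Hqc Hqd Hpos.
  set (g s := Phi (q (clamp a b s)) * exp (c * s)).
  assert (Hends : forall s, a <= s <= b -> g s = Phi (q s) * exp (c * s))
    by (intros s Hs; unfold g; rewrite clamp_id by lra; reflexivity).
  rewrite <- !Hends by lra.
  apply (nondecreasing_of_derive_nonneg g
           (fun t => (dPhi (q t) * dq t + c * Phi (q t)) * exp (c * t))); [lra | | |].
  - intros x Hx; apply continuity_pt_filterlim.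
    apply (continuous_mult (K := R_AbsRing)).
    + apply (continuous_comp (fun s => q (clamp a b s)) Phi).
      * apply continuous_comp_clamp; auto.
      * apply (ex_derive_continuous (K := R_AbsRing) (V := R_NormedModule)).
        eexists; apply HPhi.
    + apply (ex_derive_continuous (K := R_AbsRing) (V := R_NormedModule)).
      auto_derive; auto.
  - intros x Hx.
    apply is_derive_ext_loc with (fun s => Phi (q s) * exp (c * s)).
    + apply (filter_imp (fun s => a < s < b)).
      * intros s Hs; symmetry; apply Hends; lra.
      * exact (open_and _ _ (open_gt a) (open_lt b) x Hx).
    + assert (He : is_derive (fun s => exp (c * s)) x (c * exp (c * x)))
        by (auto_derive; auto; ring).
      assert (H := is_derive_mult _ _ x _ _
                     (is_derive_comp Phi q x _ _ (HPhi (q x)) (Hqd x Hx)) He Rmult_comm).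
      replace ((dPhi (q x) * dq x + c * Phi (q x)) * exp (c * x))
        with (dq x * dPhi (q x) * exp (c * x) + Phi (q x) * (c * exp (c * x))) by ring.
      exact H.
  - intros x Hx; apply Rmult_le_pos; [apply Hpos; auto | left; apply exp_pos].
Qed.

Lemma nondecreasing_of_within_continuous (q dq : R -> R) (a b : R) : a <= b ->
  (forall t, a <= t <= b ->
     filterlim q (within (fun s => a <= s <= b) (locally t)) (locally (q t))) ->
  (forall t, a < t < b -> is_derive q t (dq t)) ->
  (forall t, a < t < b -> 0 <= dq t) ->
  q a <= q b.
Proof.
  intros Hab Hqc Hqd Hpos.
  assert (H := exp_weighted_comp_le id (fun _ => 1) q dq 0 a b Hab
                 (fun y => is_derive_id y) Hqc Hqd).
  unfold id in H; rewrite !Rmult_0_l, exp_0, !Rmult_1_r in H.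
  apply H; intros t Ht; rewrite Rmult_0_l, Rmult_1_l, Rplus_0_r; auto.
Qed.

Lemma continuous_nonvanishing_pos (f : R -> R) (a b : R) :
  (forall x, a < x < b -> continuous f x) ->
  (forall x, a < x < b -> f x <> 0) ->
  forall x y, a < x < b -> a < y < b -> 0 < f x -> 0 < f y.
Proof.
  intros Hc Hnz x y Hx Hy Hfx.
  destruct (Rlt_or_le 0 (f y)) as [Hfy | Hfy]; [exact Hfy | exfalso].
  set (u := Rmin x y); set (v := Rmax x y).
  assert (Huv : a < u /\ u <= v /\ v < b /\ u <= x <= v /\ u <= y <= v)
    by (unfold u, v, Rmin, Rmax; destruct Rle_dec; lra).
  destruct (IVT_gen (fun s => f (clamp u v s)) x y 0) as [z [_ Hz]].
  - intros s; apply continuity_pt_filterlim, (continuous_comp (clamp u v) f).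
    + apply continuous_clamp; lra.
    + pose proof (clamp_in_interval u v s ltac:(lra)); apply Hc; lra.
  - rewrite (clamp_id u v x), (clamp_id u v y) by lra.
    unfold Rmin, Rmax; destruct Rle_dec; lra.
  - pose proof (clamp_in_interval u v z ltac:(lra)).
    apply (Hnz (clamp u v z)); [lra | exact Hz].
Qed.

Lemma ham_eq_half_angle (sg q p e : R) :
  ham sg q p = e -> p ^ 2 = 2 * e + 4 * sg * sin (q / 2) ^ 2.
Proof.
  unfold ham; intros <-.
  replace (cos q) with (1 - 2 * sin (q / 2) * sin (q / 2))
    by (rewrite <- cos_2a_sin; f_equal; field).
  field.
Qed.

Section Pendulum.

Variables (sg k e t0 t1 : R) (q : R -> R).
Hypotheses (k_pos : 0 < k) (k_sq : k * k = sg) (t0_lt_t1 : t0 < t1)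
  (q_EL : pendulum_EL_solution sg t0 t1 q) (q_t0 : q t0 = 0) (q_t1 : q t1 = PI)
  (q_energy : forall t, t0 < t < t1 -> ham sg (q t) (Derive q t) = e).

Local Notation p := (Derive q).

Let q_within t : t0 <= t <= t1 ->
  filterlim q (within (fun s => t0 <= s <= t1) (locally t)) (locally (q t)).
Proof. apply q_EL. Qed.

Let q_derive t : t0 < t < t1 -> is_derive q t (p t).
Proof. intros Ht; apply Derive_correct, q_EL, Ht. Qed.

Let p_derive t : t0 < t < t1 -> is_derive p t (sg * sin (q t)).
Proof. apply q_EL. Qed.

Let p_sq t : t0 < t < t1 -> p t ^ 2 = 2 * e + 4 * sg * sin (q t / 2) ^ 2.
Proof. intros Ht; apply ham_eq_half_angle, q_energy, Ht. Qed.

Lemma energy_pos : 0 < e.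
Proof.
  destruct (Rlt_or_le 0 e) as [He | He]; [exact He | exfalso].
  assert (Hd : forall y, is_derive (fun y => - sin (y / 2) ^ 2) y
                                    (- (sin (y / 2) * cos (y / 2))))
    by (intros y; auto_derive; [auto | unfold Rdiv; field]).
  assert (H := exp_weighted_comp_le _ _ q p (- (2 * k)) t0 t1 ltac:(lra) Hd
                 q_within q_derive).
  rewrite q_t0, q_t1, Rdiv_0_l, sin_0, sin_PI2 in H.
  enough (0 <= - (1 ^ 2) * exp (- (2 * k) * t1))
    by (pose proof (exp_pos (- (2 * k) * t1)); lra).
  eapply Rle_trans, H; [right; ring |].
  intros t Ht; pose proof (p_sq t Ht) as Hp; pose proof (COS_bound (q t / 2)).
  set (s := sin (q t / 2)) in *; set (c := cos (q t / 2)) in *.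
  assert (Hsp : Rabs (s * p t) <= 2 * k * s ^ 2).
  { apply Rsqr_incr_0_var; [| nra].
    rewrite <- Rsqr_abs; unfold Rsqr.
    replace (s * p t * (s * p t)) with (s ^ 2 * p t ^ 2) by ring.
    rewrite Hp, <- k_sq; nra. }
  assert (s * c * p t <= Rabs (s * p t))
    by (destruct (Rle_or_lt 0 (s * p t));
        [rewrite Rabs_right by lra | rewrite Rabs_left by lra]; nra).
  nra.
Qed.

Lemma velocity_pos t : t0 < t < t1 -> 0 < p t.
Proof.
  intros Ht.
  assert (Hnz : forall x, t0 < x < t1 -> - p x <> 0).
  { intros x Hx Hz; pose proof (p_sq x Hx); pose proof (pow2_ge_0 (sin (q x / 2))).
    pose proof energy_pos; assert (p x = 0) by lra; nra. }
  assert (Hc : forall x, t0 < x < t1 -> continuous (fun s => - p s) x).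
  { intros x Hx; apply (ex_derive_continuous (K := R_AbsRing) (V := R_NormedModule)).
    auto_derive; eexists; apply p_derive, Hx. }
  destruct (Rlt_or_le 0 (p t)) as [Hp | Hp]; [exact Hp | exfalso].
  assert (Hneg : forall x, t0 < x < t1 -> 0 < - p x).
  { intros x Hx; apply (continuous_nonvanishing_pos _ t0 t1 Hc Hnz t x Ht Hx).
    specialize (Hnz t Ht); lra. }
  assert (H := exp_weighted_comp_le Ropp (fun _ => -1) q p 0 t0 t1 ltac:(lra)
                 (fun y => is_derive_opp _ y 1 (is_derive_id y)) q_within q_derive).
  rewrite q_t0, q_t1, !Rmult_0_l, exp_0 in H.
  enough (- 0 * 1 <= - PI * 1) by (pose proof PI_RGT_0; lra).
  apply H; intros x Hx; specialize (Hneg x Hx); lra.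
Qed.

Lemma position_range t : t0 < t < t1 -> 0 <= q t <= PI.
Proof.
  intros Ht; rewrite <- q_t0, <- q_t1; split;
    (apply (nondecreasing_of_within_continuous q p); [lra | | | ]);
    intros x Hx; try (apply q_derive || (left; apply velocity_pos)); try lra;
    apply (filterlim_within_subinterval q t0 t1); try lra; apply q_within; lra.
Qed.

Let half_angle_bounds t : t0 < t < t1 ->
  0 <= sin (q t / 2) /\ 0 <= cos (q t / 2) /\ 1 - cos (q t / 2) <= sin (q t / 2)
  /\ 2 * k * sin (q t / 2) <= p t.
Proof.
  intros Ht; destruct (position_range t Ht); pose proof PI_RGT_0.
  set (s := sin (q t / 2)); set (c := cos (q t / 2)).
  assert (0 <= s) by (apply sin_ge_0; unfold Rdiv; nra).
  assert (0 <= c) by (apply cos_ge_0; unfold Rdiv; nra).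
  pose proof (sin2_cos2 (q t / 2)) as Hsc; unfold Rsqr in Hsc; fold s c in Hsc.
  pose proof (p_sq t Ht); pose proof energy_pos; pose proof (velocity_pos t Ht).
  repeat split; try assumption; [nra |].
  assert ((2 * k * s) ^ 2 <= p t ^ 2) by (rewrite (p_sq t Ht), <- k_sq; fold s; nra).
  nra.
Qed.

(* [A (q t) = 2 k sin (q t / 2) + q' t], but [A o q] involves [q] only and is therefore
   continuous up to the endpoints, where [q'] need not exist. *)
Let A y := 2 * k * sin (y / 2) + sqrt (2 * e + 4 * sg * sin (y / 2) ^ 2).
Let dA y := k * cos (y / 2)
  + 2 * sg * sin (y / 2) * cos (y / 2) / sqrt (2 * e + 4 * sg * sin (y / 2) ^ 2).

Let A_derive y : is_derive A y (dA y).
Proof.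
  pose proof energy_pos; pose proof (pow2_ge_0 (sin (y / 2))).
  assert (0 < 2 * e + 4 * sg * sin (y / 2) ^ 2) by nra.
  assert (sqrt (2 * e + 4 * sg * sin (y / 2) ^ 2) <> 0)
    by (apply Rgt_not_eq, sqrt_lt_R0; lra).
  unfold A, dA; auto_derive; [unfold Rdiv in *; lra |].
  unfold Rdiv in *.
  replace (sin (y * / 2) * (sin (y * / 2) * 1)) with (sin (y * / 2) ^ 2) by ring.
  field; auto.
Qed.

Let sqrt_energy_eq_velocity t : t0 < t < t1 ->
  sqrt (2 * e + 4 * sg * sin (q t / 2) ^ 2) = p t.
Proof.
  intros Ht; rewrite <- (p_sq t Ht); apply sqrt_pow2; left; apply velocity_pos, Ht.
Qed.

Let A_0 : A 0 = sqrt (2 * e).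
Proof.
  unfold A; rewrite Rdiv_0_l, sin_0.
  replace (2 * e + 4 * sg * 0 ^ 2) with (2 * e) by ring; ring.
Qed.

Let A_PI : A PI = 2 * k + sqrt (2 * e + 4 * sg).
Proof.
  unfold A; rewrite sin_PI2.
  replace (2 * e + 4 * sg * 1 ^ 2) with (2 * e + 4 * sg) by ring; ring.
Qed.

Let exp_split : exp (- k * t1) = exp (- k * t0) * exp (- k * (t1 - t0)).
Proof. rewrite <- exp_plus; f_equal; ring. Qed.

Lemma sqrt_energy_lower_bound :
  (2 * k + sqrt (2 * e + 4 * sg)) * exp (- k * (t1 - t0)) <= sqrt (2 * e).
Proof.
  assert (H := exp_weighted_comp_le (fun y => - A y) (fun y => - dA y) q p (- k) t0 t1
                 ltac:(lra) (fun y => is_derive_opp _ y _ (A_derive y)) q_within q_derive).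
  rewrite q_t0, q_t1, A_0, A_PI in H.
  apply (Rmult_le_reg_l (exp (- k * t0))); [apply exp_pos |].
  enough (- sqrt (2 * e) * exp (- k * t0)
          <= - (2 * k + sqrt (2 * e + 4 * sg)) * exp (- k * t1))
    by (rewrite exp_split in *; nra).
  apply H; intros t Ht; destruct (half_angle_bounds t Ht) as (? & ? & ? & ?).
  pose proof (velocity_pos t Ht).
  unfold A, dA; rewrite (sqrt_energy_eq_velocity t Ht), <- k_sq.
  replace (- (k * cos (q t / 2) + 2 * (k * k) * sin (q t / 2) * cos (q t / 2) / p t) * p t
           + - k * - (2 * k * sin (q t / 2) + p t))
    with (k * (1 - cos (q t / 2)) * (2 * k * sin (q t / 2) + p t)) by (field; lra).
  pose proof (COS_bound (q t / 2)).
  apply Rmult_le_pos; [apply Rmult_le_pos |]; nra.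
Qed.

Lemma sqrt_energy_upper_bound :
  sqrt (2 * e) <= (2 * k + sqrt (2 * e + 4 * sg)) * exp (PI / 2) * exp (- k * (t1 - t0)).
Proof.
  assert (Hd : forall y, is_derive (fun y => A y * exp (y / 2)) y
                           (dA y * exp (y / 2) + A y * (exp (y / 2) / 2))).
  { intros y; apply (is_derive_mult A (fun y => exp (y / 2)));
      [apply A_derive | | apply Rmult_comm].
    auto_derive; [auto | unfold Rdiv; field]. }
  assert (H := exp_weighted_comp_le _ _ q p (- k) t0 t1 ltac:(lra) Hd q_within q_derive).
  cbv beta in H; rewrite q_t0, q_t1, A_0, A_PI, Rdiv_0_l, exp_0 in H.
  enough (sqrt (2 * e) * 1 * exp (- k * t0)
          <= (2 * k + sqrt (2 * e + 4 * sg)) * exp (PI / 2) * exp (- k * t1))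
    by (rewrite exp_split in *; pose proof (exp_pos (- k * t0)); nra).
  apply H; intros t Ht; destruct (half_angle_bounds t Ht) as (? & ? & ? & ?).
  pose proof (velocity_pos t Ht); pose proof (exp_pos (q t / 2)).
  unfold A, dA; rewrite (sqrt_energy_eq_velocity t Ht), <- k_sq.
  replace (((k * cos (q t / 2) + 2 * (k * k) * sin (q t / 2) * cos (q t / 2) / p t)
               * exp (q t / 2) + (2 * k * sin (q t / 2) + p t) * (exp (q t / 2) / 2)) * p t
           + - k * ((2 * k * sin (q t / 2) + p t) * exp (q t / 2)))
    with (exp (q t / 2) * (2 * k * sin (q t / 2) + p t)
          * (p t / 2 - k * (1 - cos (q t / 2)))) by (field; lra).
  apply Rmult_le_pos; [apply Rmult_le_pos |]; nra.
Qed.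

Lemma energy_estimate : PI < k * (t1 - t0) ->
  8 * sg * exp (- (2 * k) * (t1 - t0)) <= e
  /\ e <= 32 * exp PI * sg * exp (- (2 * k) * (t1 - t0)).
Proof.
  intros Hfast.
  set (Y := exp (- k * (t1 - t0))).
  replace (exp (- (2 * k) * (t1 - t0))) with (Y * Y)
    by (unfold Y; rewrite <- exp_plus; f_equal; ring).
  pose proof sqrt_energy_lower_bound as Hlo; pose proof sqrt_energy_upper_bound as Hhi.
  fold Y in Hlo, Hhi; pose proof energy_pos.
  pose proof (sqrt_pos (2 * e)); pose proof (sqrt_pos (2 * e + 4 * sg)).
  set (r := sqrt (2 * e)) in *; set (w := sqrt (2 * e + 4 * sg)) in *.
  assert (Hr : r * r = 2 * e) by (apply sqrt_sqrt; lra).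
  assert (Hw : w * w = 2 * e + 4 * sg) by (apply sqrt_sqrt; nra).
  assert (Hw_lo : 2 * k <= w) by nra.
  assert (Hw_hi : w <= r + 2 * k) by nra.
  assert (HY : 0 < Y) by apply exp_pos.
  set (Z := exp (PI / 2) * Y) in Hhi.
  assert (HZ : Z <= / 2).
  { assert (Hexp2 : 2 < exp (PI / 2))
      by (pose proof PI2_1; pose proof (exp_ineq1 (PI / 2) ltac:(lra)); lra).
    assert (HZe : Z * exp (PI / 2) = exp (PI - k * (t1 - t0)))
      by (unfold Z, Y; rewrite <- !exp_plus; f_equal; field).
    assert (exp (PI - k * (t1 - t0)) < 1) by (rewrite <- exp_0; apply exp_increasing; lra).
    pose proof (exp_pos (PI / 2)); unfold Z in *; nra. }
  assert (HeP : exp PI = exp (PI / 2) * exp (PI / 2)) by (rewrite <- exp_plus; f_equal; field).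
  assert (Hr_lo : 4 * k * Y <= r) by nra.
  assert (Hr_hi : r <= 8 * k * Z) by (unfold Z in *; nra).
  assert (4 * k * Y * (4 * k * Y) <= r * r) by (apply Rmult_le_compat; nra).
  assert (r * r <= 8 * k * Z * (8 * k * Z)) by (apply Rmult_le_compat; nra).
  rewrite <- k_sq; split; [nra |].
  unfold Z in *; nra.
Qed.

End Pendulum.

Lemma sqrt_sigma_n (a : R) (n : nat) : sqrt (sigma_n a n) = Rpower (INR n) (- (a / 2)).
Proof.
  unfold sigma_n; rewrite <- Rpower_sqrt by apply exp_pos.
  rewrite Rpower_mult; f_equal; field.
Qed.

Theorem lemma2p2 (a eps : R) (ha : 0 < a) (heps : 0 < eps) :
  exists C : R, 0 < C /\
  exists C' : R, 1 < C' /\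
  forall (n : nat) (t0 t1 : R) (q : R -> R) (e : R),
    (1 <= n)%nat ->
    t0 < t1 ->
    pendulum_EL_solution (sigma_n a n) t0 t1 q ->
    q t0 = 0 -> q t1 = PI ->
    (forall t, t0 < t < t1 -> ham (sigma_n a n) (q t) (Derive q t) = e) ->
    let omega1 := PI / (t1 - t0) in
    Rabs omega1 < Rpower (INR n) (- (a / 2) - eps) ->
    / C' * (sigma_n a n * exp (- (C * sqrt (sigma_n a n)) / Rabs omega1)) < e /\
    e < C' * (sigma_n a n * exp (- (C * sqrt (sigma_n a n)) / Rabs omega1)).
Proof.
  pose proof PI_RGT_0; pose proof (exp_pos PI).
  exists (2 * PI); split; [lra |]; exists (32 * exp PI + 1); split; [lra |].
  intros n t0 t1 q e Hn Ht Hq Hq0 Hq1 He omega1 Homega.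
  set (sg := sigma_n a n) in *; set (k := sqrt sg).
  assert (Hsg : 0 < sg) by apply exp_pos.
  assert (Hk : 0 < k) by (apply sqrt_lt_R0, Hsg).
  assert (Hom : Rabs omega1 = PI / (t1 - t0))
    by (apply Rabs_right, Rle_ge, Rlt_le, Rdiv_lt_0_compat; lra).
  assert (Hfast : PI < k * (t1 - t0)).
  { assert (Hslow : PI / (t1 - t0) < k).
    { rewrite <- Hom; eapply Rlt_le_trans; [exact Homega |].
      unfold k, sg; rewrite sqrt_sigma_n.
      apply Rle_Rpower; [apply (le_INR 1 n), Hn | lra]. }
    apply (Rmult_lt_compat_r (t1 - t0)) in Hslow; [| lra].
    unfold Rdiv in Hslow; rewrite Rmult_assoc, Rinv_l, Rmult_1_r in Hslow; lra. }
  destruct (energy_estimate sg k e t0 t1 q Hk (sqrt_sqrt sg ltac:(lra)) Ht Hq Hq0 Hq1 He Hfast)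
    as [Hlo Hhi].
  replace (- (2 * PI * k) / Rabs omega1) with (- (2 * k) * (t1 - t0))
    by (rewrite Hom; field; lra).
  set (X := sg * exp (- (2 * k) * (t1 - t0))).
  assert (HX : 0 < X) by (apply Rmult_lt_0_compat; [lra | apply exp_pos]).
  assert (/ (32 * exp PI + 1) < 1) by (rewrite <- Rinv_1; apply Rinv_lt_contravar; lra).
  unfold X in *; split; nra.
Qed.
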